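(* For $n\ge1$, let $g(n)$ be the number of permutations of $[n]$ with all valleys even and all peaks odd that end with an ascent, and let $c(n)$, $d(n)$ be the numbers of permutations of $[n]$ in which every alternating run has length less than $3$ and the last alternating run has length $1$, respectively $2$. Then $g(n)=c(n)$ if $n$ is odd and $g(n)=d(n)$ if $n$ is even.
   Context: For $\pi=\pi_1\cdots\pi_n$: index $i\in\{2,\dots,n-1\}$ is a peak if $\pi_{i-1}<\pi_i>\pi_{i+1}$, a valley if $\pi_{i-1}>\pi_i<\pi_{i+1}$; $\pi$ ends with an ascent if $n\ge2$ and $\pi_{n-1}<\pi_n$. $i\in[n-1]$ is an alternating descent if $i$ odd and $\pi_i>\pi_{i+1}$, or $i$ even and $\pi_i<\pi_{i+1}$; an alternating run is a maximal block of consecutive entries containing no alternating descent; the last alternating run is the one containing $\pi_n$. *)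

(* Permutations of [n] are lists s : seq nat with
   perm_eq s (iota 1 n); entries are 1-based: pi s i = pi_i. *)
From mathcomp Require Import all_boot.
Set Implicit Arguments. Unset Strict Implicit. Unset Printing Implicit Defensive.

Definition pent (s : seq nat) (i : nat) : nat := nth 0 s i.-1.

Definition is_peak (s : seq nat) (i : nat) : bool :=
  [&& 2 <= i, i <= (size s).-1, pent s i.-1 < pent s i & pent s i.+1 < pent s i].

Definition is_valley (s : seq nat) (i : nat) : bool :=
  [&& 2 <= i, i <= (size s).-1, pent s i < pent s i.-1 & pent s i < pent s i.+1].

Definition ends_with_ascent (s : seq nat) : bool :=
  (2 <= size s) && (pent s (size s).-1 < pent s (size s)).

Definition valleys_even_peaks_odd (s : seq nat) : bool :=
  all (fun i => is_valley s i ==> ~~ odd i) (iota 1 (size s)) &&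
  all (fun i => is_peak s i ==> odd i) (iota 1 (size s)).

Definition is_altdes (s : seq nat) (i : nat) : bool :=
  if odd i then pent s i.+1 < pent s i else pent s i < pent s i.+1.

Definition altdes_set (s : seq nat) : seq nat :=
  [seq i <- iota 1 (size s).-1 | is_altdes s i].

(* lengths of the alternating runs, left to right: the runs are the blocks
   [1..d1], [d1+1..d2], ..., [dk+1..n] cut after the alternating descents *)
Definition altrun_lengths (s : seq nat) : seq nat :=
  pairmap (fun a b => b - a) 0 (rcons (altdes_set s) (size s)).

Definition last_altrun_length (s : seq nat) : nat := last 0 (altrun_lengths s).

Definition g_count (n : nat) : nat :=
  count (fun s => valleys_even_peaks_odd s && ends_with_ascent s)
        (permutations (iota 1 n)).

Definition c_count (n : nat) : nat :=
  count (fun s => all (fun l => l < 3) (altrun_lengths s) && (last_altrun_length s == 1))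
        (permutations (iota 1 n)).

Definition d_count (n : nat) : nat :=
  count (fun s => all (fun l => l < 3) (altrun_lengths s) && (last_altrun_length s == 2))
        (permutations (iota 1 n)).

From mathcomp Require Import all_boot zify.

(** A valley at an odd index or a peak at an even index [j+1] is exactly a
    position where neither [j] nor [j+1] is an alternating descent.  So the
    parity condition says that no two consecutive positions are alternating
    ascents, which is also what "all alternating runs have length at most 2"
    says.  Under it, the last run has length 1 or 2 according as [n-1] is an
    alternating descent or not, and for a permutation ending with an ascent
    this is decided by the parity of [n]. *)

Definition altdes_dense (s : seq nat) : bool :=
  all (fun j => is_altdes s j || is_altdes s j.+1) (iota 1 (size s).-2).

Lemma pent_neq (s : seq nat) (i j : nat) :
  uniq s -> 1 <= i <= size s -> 1 <= j <= size s -> i != j -> pent s i != pent s j.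
Proof.
move=> us hi hj /eqP ij.
have [hi' hj'] : i.-1 < size s /\ j.-1 < size s by lia.
by rewrite /pent nth_uniq //; apply/eqP; lia.
Qed.

Lemma valley_peak_parity_altdes (s : seq nat) (j : nat) :
  uniq s -> 1 <= j -> j.+2 <= size s ->
  ((is_valley s j.+1 ==> ~~ odd j.+1) && (is_peak s j.+1 ==> odd j.+1)) =
  is_altdes s j || is_altdes s j.+1.
Proof.
move=> us j1 jn.
have n12 : pent s j != pent s j.+1 by apply: pent_neq => //; lia.
have n23 : pent s j.+1 != pent s j.+2 by apply: pent_neq => //; lia.
have inner : j.+1 <= (size s).-1 by lia.
rewrite /is_valley /is_peak /is_altdes /= ltnS j1 inner /=.
move: n12 n23; case: (odd j) => /=;
case: (ltngtP (pent s j) (pent s j.+1)) => //=;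
by case: (ltngtP (pent s j.+1) (pent s j.+2)).
Qed.

Lemma valleys_even_peaks_odd_altdes_dense (s : seq nat) :
  uniq s -> valleys_even_peaks_odd s = altdes_dense s.
Proof.
move=> us; rewrite /valleys_even_peaks_odd -all_predI /altdes_dense.
apply/allP/allP => /= allH j; rewrite mem_iota => /andP [j1 jn].
  by rewrite -valley_peak_parity_altdes //; [apply: allH; rewrite mem_iota|]; lia.
have [inner | outer] := boolP ((2 <= j) && (j <= (size s).-1)).
  case: j j1 jn inner => [|j] //= _ _ inner.
  by rewrite valley_peak_parity_altdes //; [apply: allH; rewrite mem_iota|..]; lia.
rewrite /is_valley /is_peak.
by case: (2 <= j) (j <= _) outer => [] [].
Qed.

(* The [pairmap] lists the lengths of the pieces of the interval (p, p+1+k]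
   cut after each position [j] in [p+1, p+k] with [f j]. *)
Lemma all_pieces_lt3_filter_iota (f : pred nat) (p k : nat) :
  all (fun l => l < 3)
      (pairmap (fun a b => b - a) p (rcons [seq j <- iota p.+1 k | f j] (p.+1 + k))) =
  all (fun j => f j || f j.+1) (iota p.+1 k.-1).
Proof.
elim/ltn_ind: k p => -[|k] IH p; first by rewrite /=; lia.
have [fp1 | nfp1] := boolP (f p.+1).
  rewrite /= fp1 /= -addSnnS IH // subSnn.
  by case: k {IH} => //= k; rewrite fp1.
rewrite /= (negbTE nfp1) -addSnnS.
case: k IH => [|k] IH; first by rewrite /=; lia.
have [fp2 | nfp2] := boolP (f p.+2).
  rewrite /= fp2 /= -addSnnS IH // subSn // subSnn.
  by case: k {IH} => [|k] /=; rewrite ?fp2 ?orbT.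
rewrite /= (negbTE nfp2) -addSnnS.
case E: [seq j <- iota p.+3 k | f j] => [|x cs] /=; first lia.
have : x \in [seq j <- iota p.+3 k | f j] by rewrite E mem_head.
by rewrite mem_filter mem_iota => /and3P [_ px _]; lia.
Qed.

Lemma altrun_lengths_lt3 (s : seq nat) :
  1 <= size s -> all (fun l => l < 3) (altrun_lengths s) = altdes_dense s.
Proof.
case: s => // x s _; rewrite /altrun_lengths /altdes_set /altdes_dense /=.
by rewrite -(add1n (size s)) all_pieces_lt3_filter_iota.
Qed.

Lemma last_altrun_length_mem (s : seq nat) :
  last_altrun_length s \in altrun_lengths s.
Proof.
rewrite /last_altrun_length.
have : 0 < size (altrun_lengths s) by rewrite size_pairmap size_rcons.
by case: (altrun_lengths s) => // l ls _; apply: mem_last.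
Qed.

Lemma last_filter_iota1_le (f : pred nat) (m : nat) :
  last 0 [seq j <- iota 1 m | f j] <= m.
Proof.
have := mem_last 0 [seq j <- iota 1 m | f j]; rewrite inE => /orP [/eqP -> //|].
by rewrite mem_filter mem_iota add1n ltnS => /and3P [].
Qed.

Lemma last_filter_iota1S (f : pred nat) (m : nat) :
  last 0 [seq j <- iota 1 m.+1 | f j] =
  if f m.+1 then m.+1 else last 0 [seq j <- iota 1 m | f j].
Proof. by rewrite -(addn1 m) iotaD filter_cat last_cat /= add1n addn1; case: (f m.+1). Qed.

Lemma last_altrun_length_cases (s : seq nat) : 2 <= size s ->
  if is_altdes s (size s).-1 then last_altrun_length s = 1
  else 2 <= last_altrun_length s.
Proof.
rewrite /last_altrun_length /altrun_lengths -cats1 pairmap_cat last_cat /= /altdes_set.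
case: (size s) => [|[|m]] // _; rewrite !succnK last_filter_iota1S.
case: (is_altdes s m.+1); first lia.
by have := last_filter_iota1_le (is_altdes s) m; lia.
Qed.

Lemma ends_with_ascent_altdes (s : seq nat) : uniq s -> 2 <= size s ->
  ends_with_ascent s = (is_altdes s (size s).-1 == odd (size s)).
Proof.
move=> us; rewrite /ends_with_ascent /is_altdes.
case: (size s) (@pent_neq s (size s).-1 (size s) us) => [|[|m]] // neq _.
rewrite !succnK /= negbK; case: (odd m) => /=; rewrite ?eqbF_neg -?leqNgt //.
by rewrite ltn_neqAle neq //; lia.
Qed.

Lemma valleys_even_peaks_odd_ascent_altruns (s : seq nat) : uniq s -> 2 <= size s ->
  valleys_even_peaks_odd s && ends_with_ascent s =
  all (fun l => l < 3) (altrun_lengths s) &&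
  (last_altrun_length s == if odd (size s) then 1 else 2).
Proof.
move=> us hs; rewrite valleys_even_peaks_odd_altdes_dense // -altrun_lengths_lt3; last lia.
have [runs_lt3 /= | //] := boolP (all (fun l => l < 3) (altrun_lengths s)).
have last_lt3 : last_altrun_length s < 3 := allP runs_lt3 _ (last_altrun_length_mem s).
rewrite ends_with_ascent_altdes //.
move: (last_altrun_length_cases s hs) last_lt3.
by case: (is_altdes _ _); case: (odd _) => /=; lia.
Qed.

Theorem mainTheorem16 (n : nat) (hn : 2 <= n) :
  g_count n = (if odd n then c_count n else d_count n).
Proof.
rewrite /g_count /c_count /d_count.
have perm_spec s : s \in permutations (iota 1 n) -> uniq s /\ size s = n.
  by rewrite mem_permutations => p; rewrite (perm_uniq p) (perm_size p) iota_uniq size_iota.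
case on: (odd n); apply: eq_in_count => s /perm_spec [us sz];
by rewrite valleys_even_peaks_odd_ascent_altruns ?sz ?on.
Qed.
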